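(* Let $p\in(0,1]$ and consider two independent doors, each initially closed, each opening independently with probability $p$ on every knock on it (and staying open once open). Let $A_{\mathrm{simp}}=(1,2)^\infty$ be the alternating knock sequence $1,2,1,2,\dots$, executed without feedback. Then the expected number of knocks until both doors are open is $\mathbb{T}_{\mathcal{I}}(A_{\mathrm{simp}})=\frac{3}{p}-1$. *)

From Stdlib Require Import Reals Lra Lia Arith List.
From Coquelicot Require Import Coquelicot.
Open Scope R_scope.

(* Doors are indexed by natural numbers 0 .. n-1 (door "1" of the paper is 0,
   door "2" is 1).  A knock sequence (executed without feedback) is a function
   A : nat -> nat giving the door knocked at step s = 0,1,2,...            *)

Fixpoint knocks_on (A : nat -> nat) (i : nat) (t : nat) : nat :=
  match t with
  | O => O
  | S t' => (if Nat.eqb (A t') i then 1 else 0) + knocks_on A i t'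
  end.

(* Each door, initially closed, opens independently with probability p on
   every knock on it and stays open.  Hence door i is still closed after t
   knocks with probability (1-p)^(knocks_on A i t), and by independence of the
   doors, all n doors are open after t knocks with probability
   prod_{i<n} (1 - (1-p)^(knocks_on A i t)). *)
Definition all_open_prob (n : nat) (p : R) (A : nat -> nat) (t : nat) : R :=
  fold_right Rmult 1 (map (fun i => 1 - (1 - p) ^ (knocks_on A i t)) (seq 0 n)).

Definition tail_prob (n : nat) (p : R) (A : nat -> nat) (t : nat) : R :=
  1 - all_open_prob n p A t.

(* The expected number of knocks T_I(A) equals v:  E[T] = sum_{t>=0} P(T > t)
   (T is a nonnegative integer random variable), the series converging to v. *)
Definition expected_knocks_is (n : nat) (p : R) (A : nat -> nat) (v : R) : Prop :=
  is_series (tail_prob n p A) v.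

Definition A_simp : nat -> nat := fun s => Nat.modulo s 2.

(* With q = 1 - p, door i is still closed after t knocks with probability
   q^(k_i t), where k_i t counts the knocks on door i, so
   P(T > t) = q^(k_0 t) + q^(k_1 t) - q^(k_0 t + k_1 t).  Under the alternating
   sequence k_0 (2m) = k_1 (2m) = m, while k_0 (2m+1) = m+1 and k_1 (2m+1) = m.
   Both the even- and the odd-indexed tails are therefore combinations of the
   geometric series in q and q^2, with sums 2/p - 1/(1-q^2) and
   (1+q)/p - q/(1-q^2); since 1 - q^2 = p (1+q), these add up to 3/p - 1. *)
From Stdlib Require Import Reals Lra Lia.
From Coquelicot Require Import Coquelicot.
Open Scope R_scope.

Lemma filterlim_even_odd {T : Type} (u : nat -> T) (F : (T -> Prop) -> Prop) :
  filterlim (fun m => u (2 * m)%nat) eventually F ->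
  filterlim (fun m => u (S (2 * m))) eventually F ->
  filterlim u eventually F.
Proof.
  intros Heven Hodd P HP.
  destruct (Heven P HP) as [N1 HN1], (Hodd P HP) as [N2 HN2].
  exists (2 * max N1 N2)%nat; intros n Hn.
  destruct (Nat.Even_or_Odd n) as [[m ->] | [m ->]].
  - apply HN1; lia.
  - rewrite Nat.add_1_r; apply HN2; lia.
Qed.

Lemma sum_n_odd_split (a : nat -> R) (m : nat) :
  sum_n a (S (2 * m)) =
  sum_n (fun k => a (2 * k)%nat) m + sum_n (fun k => a (S (2 * k))) m.
Proof.
  induction m as [|m IH].
  - rewrite !sum_O, sum_Sn, sum_O; reflexivity.
  - replace (S (2 * S m)) with (S (S (S (2 * m)))) by lia.
    rewrite (sum_Sn a (S (S (2 * m)))), (sum_Sn a (S (2 * m))), IH, !sum_Sn.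
    replace (2 * S m)%nat with (S (S (2 * m))) by lia.
    unfold plus; simpl; ring.
Qed.

Lemma is_series_even_odd (a : nat -> R) (l1 l2 : R) :
  is_series (fun k => a (2 * k)%nat) l1 ->
  is_series (fun k => a (S (2 * k))) l2 ->
  is_series a (l1 + l2).
Proof.
  intros Heven Hodd.
  assert (Hsum_odd : is_lim_seq (fun m => sum_n a (S (2 * m))) (l1 + l2)).
  { eapply is_lim_seq_ext; [intros m; symmetry; apply sum_n_odd_split |].
    exact (is_lim_seq_plus' _ _ _ _ Heven Hodd). }
  apply filterlim_even_odd; [| exact Hsum_odd].
  (* The even partial sums lag the odd ones by a term of a convergent series. *)
  assert (Hterm : is_lim_seq (fun m => a (S (2 * m))) 0).
  { apply ex_series_lim_0; exists l2; exact Hodd. }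
  change (is_lim_seq (fun m => sum_n a (2 * m)%nat) (l1 + l2)).
  replace (l1 + l2) with (l1 + l2 - 0) by ring.
  eapply is_lim_seq_ext; [| exact (is_lim_seq_minus' _ _ _ _ Hsum_odd Hterm)].
  intros m; simpl; rewrite sum_Sn; unfold plus; simpl; ring.
Qed.

Lemma is_series_scal_geom (c x : R) :
  Rabs x < 1 -> is_series (fun n => c * x ^ n) (c / (1 - x)).
Proof. intros Hx; exact (is_series_scal_l c _ _ (is_series_geom x Hx)). Qed.

Lemma tail_prob_two_doors (p : R) (A : nat -> nat) (t : nat) :
  tail_prob 2 p A t =
  (1 - p) ^ knocks_on A 0 t + (1 - p) ^ knocks_on A 1 t
  - (1 - p) ^ (knocks_on A 0 t + knocks_on A 1 t).
Proof. unfold tail_prob, all_open_prob; simpl; rewrite pow_add; ring. Qed.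

Lemma knocks_on_A_simp_even (i m : nat) :
  (i < 2)%nat -> knocks_on A_simp i (2 * m) = m.
Proof.
  intros Hi; induction m as [|m IH]; [reflexivity |].
  replace (2 * S m)%nat with (S (S (2 * m))) by lia.
  cbn [knocks_on]; rewrite IH; unfold A_simp.
  rewrite Nat.mul_comm, Nat.Div0.mod_mul.
  replace (S (m * 2)) with (1 + m * 2)%nat by lia; rewrite Nat.Div0.mod_add.
  destruct i as [|[|i]]; simpl; lia.
Qed.

Lemma knocks_on_A_simp_odd (i m : nat) :
  (i < 2)%nat -> knocks_on A_simp i (S (2 * m)) = (m + (if i =? 0 then 1 else 0))%nat.
Proof.
  intros Hi; cbn [knocks_on]; rewrite knocks_on_A_simp_even by exact Hi.
  unfold A_simp; rewrite Nat.mul_comm, Nat.Div0.mod_mul.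
  destruct i as [|[|i]]; simpl; lia.
Qed.

Lemma tail_prob_A_simp_even (p : R) (m : nat) :
  tail_prob 2 p A_simp (2 * m) = 2 * (1 - p) ^ m - 1 * ((1 - p) ^ 2) ^ m.
Proof.
  rewrite tail_prob_two_doors, !knocks_on_A_simp_even by lia.
  rewrite <- pow_mult; replace (2 * m)%nat with (m + m)%nat by lia; ring.
Qed.

Lemma tail_prob_A_simp_odd (p : R) (m : nat) :
  tail_prob 2 p A_simp (S (2 * m)) =
  (1 + (1 - p)) * (1 - p) ^ m - (1 - p) * ((1 - p) ^ 2) ^ m.
Proof.
  rewrite tail_prob_two_doors, !knocks_on_A_simp_odd by lia; cbn [Nat.eqb].
  rewrite <- pow_mult, !Nat.add_0_r, Nat.add_1_r.
  replace (2 * m)%nat with (m + m)%nat by lia.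
  rewrite Nat.add_succ_l; cbn [pow]; rewrite pow_add; ring.
Qed.

Theorem mainTheorem17 (p : R) (hp0 : 0 < p) (hp1 : p <= 1) :
  expected_knocks_is 2 p A_simp (3 / p - 1).
Proof.
  set (q := 1 - p).
  assert (Hq : 0 <= q < 1) by (unfold q; lra).
  assert (Hq_abs : Rabs q < 1) by (rewrite Rabs_pos_eq; lra).
  assert (Hq2_abs : Rabs (q ^ 2) < 1).
  { rewrite Rabs_pos_eq by (apply pow_le; lra).
    apply (pow_lt_1_compat q 2 Hq); lia. }
  replace (3 / p - 1) with
    ((2 / (1 - q) - 1 / (1 - q ^ 2)) + ((1 + q) / (1 - q) - q / (1 - q ^ 2)))
    by (unfold q; field; split; nra).
  apply is_series_even_odd.
  - eapply is_series_ext; [intros m; symmetry; apply tail_prob_A_simp_even |].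
    exact (is_series_minus _ _ _ _
             (is_series_scal_geom 2 q Hq_abs) (is_series_scal_geom 1 _ Hq2_abs)).
  - eapply is_series_ext; [intros m; symmetry; apply tail_prob_A_simp_odd |].
    exact (is_series_minus _ _ _ _
             (is_series_scal_geom (1 + q) q Hq_abs) (is_series_scal_geom q _ Hq2_abs)).
Qed.
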